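(* Let $G$ be a finite connected multigraph without self-loops, with boundary vertex $\partial$ and a collection of nonnegative generic weights $w$ on $\vec E$; let $T^*=T^*(w)$ be the MSA of $(G,\partial)$. Fix a vertex $v$ with outgoing edges $\vec e_1,\ldots,\vec e_d$, let $u=(\vec e_2)_+$, and suppose $\vec e_1\in T^*$ and $v\notin\mathfrak F_{T^*}(u)$. Let $\Sigma=\Sigma(u,v)$ be the set of endpoints of the edges of $(\mathfrak F_{T^*}(u)\cup\mathfrak F_{T^*}(v))\setminus(\mathfrak F_{T^*}(u)\cap\mathfrak F_{T^*}(v))$ other than $u\wedge v$. Let $\vec E_\Sigma$ be the set of all oriented edges whose tail lies in $\Sigma$, and $M_\Sigma=\max\{w(\vec e):\vec e\in\vec E_\Sigma\}$. Let $w'$ be a generic collection of weights with $$w'(\vec e)\ \ge 2M_\Sigma\ \text{ if }\vec e\in\vec E_\Sigma\setminus(T^*\cup\{\vec e_2\})\text{ or }\vec e=\vec e_1,\qquad w'(\vec e)=w(\vec e)\ \text{ otherwise}.$$ Then $T'=(T^*\setminus\{\vec e_1\})\cup\{\vec e_2\}$ is the MSA of $(G,\partial)$ for the weights $w'$.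
   Context: $\vec E$ is the set of oriented edges (both orientations of each edge); $\vec e_-$ tail, $\vec e_+$ head. Weights $(W_x)_{x\in N}$ are generic if $\sum_{x\in S}n_xW_x\ne0$ for all finite $S$ and integers $n_x$ not all zero. A spanning arborescence of $(G,\partial)$ is a set of oriented edges without oriented cycles in which every vertex except $\partial$ has exactly one outgoing edge and $\partial$ none; the MSA is the (unique for generic weights) one of minimal total weight. For a spanning arborescence $T$, $\mathfrak F_T(x)$ (the future of $x$) is the oriented path in $T$ from $x$ to $\partial$, viewed as a set of oriented edges; $u\wedge v$ is the first vertex at which $\mathfrak F_T(u)$ and $\mathfrak F_T(v)$ merge. *)

From mathcomp Require Import all_boot all_order all_algebra.
Set Implicit Arguments. Unset Strict Implicit. Unset Printing Implicit Defensive.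
Import Order.TTheory GRing.Theory Num.Theory.
Local Open Scope ring_scope.

(* A multigraph is given by a finite vertex type V and a finite type E of
   ORIENTED edges (both orientations of every edge are elements of E), with
   tail map [tl] (e_-) and head map [hd] (e_+).  Orientation reversal is a
   hypothesis of the main theorem. *)
Section Arbo.
Variables (V E : finType) (tl hd : E -> V).

Definition erel (T : {set E}) : rel V :=
  fun x y => [exists e in T, (tl e == x) && (hd e == y)].

Definition has_oriented_cycle (T : {set E}) : Prop :=
  exists (e0 : E) (c : seq E),
    [/\ all (fun e => e \in T) (e0 :: c),
        path (fun e f => hd e == tl f) e0 c
      & hd (last e0 c) = tl e0].

Definition spanning_arborescence (root : V) (T : {set E}) : Prop :=
  [/\ ~ has_oriented_cycle T,
      forall x, x != root -> #|[set e in T | tl e == x]| = 1%N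
    & #|[set e in T | tl e == root]| = 0%N].

Variable R : realFieldType.

Definition weight (w : E -> R) (T : {set E}) : R := \sum_(e in T) w e.

Definition generic (w : E -> R) : Prop :=
  forall n : E -> int, (exists e, n e != 0) -> \sum_e (n e)%:~R * w e != 0.

Definition is_MSA (root : V) (w : E -> R) (T : {set E}) : Prop :=
  spanning_arborescence root T /\
  forall T', spanning_arborescence root T' -> weight w T <= weight w T'.

(* the future of x in T: oriented edges of the T-path from x to the root,
   i.e. the edges of T whose tail is reachable from x along T *)
Definition future (T : {set E}) (x : V) : {set E} :=
  [set e in T | connect (erel T) x (tl e)].

(* z is the vertex u /\ v at which the futures of u and v merge: the first
   common vertex of the two T-paths (all common vertices come after it) *)
Definition is_merge (T : {set E}) (u v z : V) : bool :=
  [&& connect (erel T) u z, connect (erel T) v z &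
      [forall y, (connect (erel T) u y && connect (erel T) v y) ==>
                 connect (erel T) z y]].

Definition Sigma (T : {set E}) (u v : V) : {set V} :=
  let D := (future T u :|: future T v) :\: (future T u :&: future T v) in
  [set x | [exists e in D, (tl e == x) || (hd e == x)] && ~~ is_merge T u v x].

(* M_Sigma = max of w over the oriented edges with tail in Sigma
   (the empty max is 0; weights are nonnegative) *)
Definition M_Sigma (w : E -> R) (S : {set V}) : R :=
  \big[Num.max/0]_(e | tl e \in S) w e.
End Arbo.

From mathcomp Require Import all_boot all_order all_algebra.
From mathcomp Require Import zify lra.
Set Implicit Arguments. Unset Strict Implicit. Unset Printing Implicit Defensive.
Import Order.TTheory GRing.Theory Num.Theory.

(* The exchanged set T' is an arborescence because u = hd e2 does not reach v
   in Tstar.  Let T be any arborescence.  If T contains an edge whose weight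
   was raised, that edge alone gives w'(T) >= w(T) + M >= w(Tstar) + M >= w'(T'),
   since w(e2) <= M.  Otherwise T contains e2 and agrees with Tstar at every
   vertex of Sigma except v.  The Tstar-path from hd e1 to u /\ v runs through
   such vertices and the T-path from u /\ v to the root avoids v, so exchanging
   e2 back for e1 in T gives an arborescence, and minimality of Tstar for w
   yields w'(T') <= w'(T). *)

Section DeterministicRelations.
Variables (T : finType) (e : rel T).

Lemma connect_first_step a c :
  connect e a c -> c = a \/ exists2 b, e a b & connect e b c.
Proof.
move/connectP=> [[|b p]] /=; first by move=> _ ->; left.
by move=> /andP [eab pb] ->; right; exists b => //; apply/connectP; exists p.
Qed.

Lemma connect_sub_before (e' : rel T) x y :
  (forall a b, a != y -> connect e x a -> connect e a y -> e a b -> e' a b) ->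
  connect e x y -> connect e' x y.
Proof.
move=> sub /connectP [p pth ly].
elim: p x pth ly sub => [|a p IH] x /=; first by move=> _ ->.
move=> /andP [exa pa] ly sub; have [->|xy] := eqVneq x y; first exact: connect0.
have ay : connect e a y by apply/connectP; exists p.
apply: connect_trans (connect1 (sub _ _ xy (connect0 _ _) _ exa)) _.
  exact: connect_trans (connect1 exa) ay.
apply: IH pa ly _ => b c b_neq_y ab b_to_y ebc; apply: sub b_neq_y _ b_to_y ebc.
exact: connect_trans (connect1 exa) ab.
Qed.

Definition deterministic := forall x y1 y2, e x y1 -> e x y2 -> y1 = y2.

Hypothesis det : deterministic.

Lemma connect_first_hit (P : pred T) x y :
  connect e x y -> P y ->
  exists z, [/\ P z, connect e x z & forall y, connect e x y -> P y -> connect e z y].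
Proof.
move=> /connectP [p pth ->]; elim: p x pth => [|x' p IH] x /= pth Py.
  by exists x; split=> // y.
case Px: (P x); first by exists x; split=> // y.
case/andP: pth => exx' pth'; have [z [Pz x'z minz]] := IH _ pth' Py.
exists z; split=> //; first exact: connect_trans (connect1 exx') x'z.
move=> y' /connect_first_step [y'x|[x'' exx'' x''y']] Py'.
  by rewrite y'x Px in Py'.
by apply: minz => //; rewrite (det exx' exx'').
Qed.

Variable r : T.
Hypotheses (r_sink : forall b, ~~ e r b) (to_r : forall x, connect e x r).

(* Determinism traps every walk from [a] on the closed walk through [b], so
   the sink would lie on it. *)
Lemma no_closed_walk a b : e a b -> connect e b a -> False.
Proof.
move=> eab ba.
have step y1 y2 : connect e y1 a -> e y1 y2 -> connect e y2 a.
  case/connect_first_step => [<-|[c y1c ca]] ey.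
    by rewrite (det ey eab).
  by rewrite (det ey y1c).
have back x p : connect e x a -> path e x p -> connect e (last x p) a.
  by elim: p x => //= y p IH x xa /andP [exy /IH]; apply; exact: step xa exy.
have /connectP [p pth lst] := to_r a.
have ra : connect e r a by rewrite lst; exact: back (connect0 e a) pth.
case: (connect_first_step ra) => [ar|[c rc _]]; last by rewrite (negbTE (r_sink c)) in rc.
by move: (r_sink b); rewrite -ar eab.
Qed.

Lemma connect_antisym a b : connect e a b -> connect e b a -> a = b.
Proof.
case/connect_first_step => [->//|[c ac cb] ba].
by case: (no_closed_walk ac (connect_trans cb ba)).
Qed.

End DeterministicRelations.

Section Arborescences.
Variables (V E : finType) (tl hd : E -> V) (root : V).
Local Notation erel := (erel tl hd).
Local Notation reach T := (connect (erel T)).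

Lemma erelP (T : {set E}) x y :
  reflect (exists2 e, e \in T & tl e = x /\ hd e = y) (erel T x y).
Proof.
apply: (iffP existsP) => [[e /andP [eT /andP [/eqP ? /eqP ?]]]|[e eT [<- <-]]].
  by exists e.
by exists e; rewrite eT !eqxx.
Qed.

Lemma reach_subset (T1 T2 : {set E}) x y :
  T1 \subset T2 -> reach T1 x y -> reach T2 x y.
Proof.
move=> sT12; apply: connect_sub => a b /erelP [e eT [te he]].
by apply/connect1/erelP; exists e => //; apply: (subsetP sT12).
Qed.

Lemma erel_setD1 (T : {set E}) a x y : x != tl a -> erel T x y -> erel (T :\ a) x y.
Proof.
move=> xa /erelP [e eT [te he]]; apply/erelP; exists e => //.
by rewrite !inE eT andbT; apply: contraNneq xa => ea; rewrite -te ea.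
Qed.

Lemma reach_setD1 (T : {set E}) a x y :
  ~~ reach T x (tl a) -> reach T x y -> reach (T :\ a) x y.
Proof.
move=> xa; apply: connect_sub_before => b c _ xb _; apply: erel_setD1.
by apply: contraNneq xa => <-.
Qed.

Lemma reach_setD1_tl (T : {set E}) a x : reach T x (tl a) -> reach (T :\ a) x (tl a).
Proof. by apply: connect_sub_before => b c ba _ _; apply: erel_setD1. Qed.

Lemma reach_edge_path (T : {set E}) e0 c :
  all (fun e => e \in T) c -> path (fun e f => hd e == tl f) e0 c ->
  reach T (hd e0) (hd (last e0 c)).
Proof.
elim: c e0 => [|f c IH] e0 /=; first by move=> *; exact: connect0.
move=> /andP [fT cT] /andP [/eqP e0f pth].
by apply: connect_trans (connect1 _) (IH _ cT pth); apply/erelP; exists f; rewrite ?e0f.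
Qed.

Definition rooted_outdeg (T : {set E}) :=
  (forall x, x != root -> #|[set e in T | tl e == x]| = 1%N) /\
  #|[set e in T | tl e == root]| = 0%N.

Section RootedOutdeg.
Variable T : {set E}.
Hypothesis outT : rooted_outdeg T.

Lemma tl_neq_root e : e \in T -> tl e != root.
Proof.
move=> eT; apply/eqP => er; have /eqP := outT.2.
by rewrite cards_eq0 => /eqP/setP/(_ e); rewrite !inE eT er eqxx.
Qed.

Lemma out_edge_uniq e f : e \in T -> f \in T -> tl e = tl f -> e = f.
Proof.
move=> eT fT tef; have /eqP/cards1P [g /setP g1] := outT.1 _ (tl_neq_root eT).
by move: (g1 e) (g1 f); rewrite !inE eT fT tef eqxx => /esym/eqP -> /esym/eqP ->.
Qed.

Lemma out_edge_exists x : x != root -> exists2 e, e \in T & tl e = x.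
Proof.
move=> /outT.1/eqP/cards1P [g g1].
have : g \in [set e in T | tl e == x] by rewrite g1 set11.
by rewrite inE => /andP [gT /eqP]; exists g.
Qed.

Lemma erel_deterministic : deterministic (erel T).
Proof.
move=> x y1 y2 /erelP [e eT [te <-]] /erelP [f fT [tf <-]].
by rewrite (out_edge_uniq eT fT) // te tf.
Qed.

Lemma erel_root_sink y : ~~ erel T root y.
Proof. by apply/erelP => [[e eT [te _]]]; move: (tl_neq_root eT); rewrite te eqxx. Qed.

Lemma acyclic_of_reach : (forall x, reach T x root) -> ~ has_oriented_cycle tl hd T.
Proof.
move=> reachT [e0 [c [/andP [e0T cT] pth lst]]].
apply: (no_closed_walk erel_deterministic erel_root_sink reachT (a := tl e0) (b := hd e0)).
  by apply/erelP; exists e0.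
by rewrite -lst; exact: reach_edge_path.
Qed.

(* If [x] does not reach the root, its orbit under the out-edge map loops, and
   the loop is an oriented cycle. *)
Lemma reach_of_acyclic : ~ has_oriented_cycle tl hd T -> forall x, reach T x root.
Proof.
move=> acyc x; apply/negPn/negP => xr.
have nr y : reach T x y -> y != root by move=> xy; apply: contraNneq xr => <-.
have [e0 _ _] := out_edge_exists (nr _ (connect0 _ x)).
pose out y := odflt e0 [pick e in T | tl e == y].
have outP y : reach T x y -> out y \in T /\ tl (out y) = y.
  move=> /nr yr; rewrite /out; case: pickP => [e /andP [eT /eqP]|none] //=.
  by have [e eT te] := out_edge_exists yr; move: (none e); rewrite eT te eqxx.
pose f y := hd (out y).
have reach_f y : reach T x y -> reach T x (f y).
  move=> xy; have [yT ty] := outP _ xy.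
  by apply: connect_trans xy (connect1 _); apply/erelP; exists (out y).
have reach_iter k : reach T x (iter k f x).
  by elim: k => [|k IH]; [exact: connect0 | exact: reach_f].
have /trajectP [i lt_in iter_n] := looping_order f x.
set m := (order f x - i.+1)%N in iter_n *.
set y0 := iter i f x; set s := traject f (f y0) m.
have all_s : all (reach T x) (y0 :: s).
  apply/allP => y; rewrite inE => /orP [/eqP ->|/trajectP [k _ ->]].
    exact: reach_iter.
  by rewrite /y0 -(iterS i f x) -iterD.
apply: acyc; exists (out y0), (map out s); split.
- rewrite -map_cons all_map; apply/allP => y /(allP all_s) xy.
  exact: (outP _ xy).1.
- rewrite path_map; apply: (sub_in_path (P := reach T x)) all_s (fpath_traject f y0 m).
  by move=> y z _ /outP [_ tz] /eqP fyz; rewrite /= tz -fyz.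
- rewrite last_map last_traject (outP _ (reach_iter i)).2.
  have n_eq : order f x = (m + i).+1 by rewrite /m; lia.
  by rewrite -/(iter m.+1 f y0) -iterD -iter_n n_eq.
Qed.

End RootedOutdeg.

Lemma spanning_arborescenceP T :
  spanning_arborescence tl hd root T <-> rooted_outdeg T /\ forall x, reach T x root.
Proof.
split=> [[acyc out1 out0]|[outT reachT]].
  by split=> //; exact: (reach_of_acyclic (conj out1 out0)).
by case: (outT) => out1 out0; split=> //; exact: acyclic_of_reach.
Qed.

Lemma rooted_outdeg_exchange T a b :
  rooted_outdeg T -> a \in T -> tl a = tl b -> rooted_outdeg (b |: (T :\ a)).
Proof.
move=> outT aT tab.
have out_same x :
    x != tl a -> [set e in b |: (T :\ a) | tl e == x] = [set e in T | tl e == x].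
  move=> xa; apply/setP => e; rewrite !inE.
  have [tex|] := eqVneq (tl e) x; last by rewrite !andbF.
  have eb : e != b by apply: contraNneq xa => eb; rewrite -tex eb tab.
  have ea : e != a by apply: contraNneq xa => ea; rewrite -tex ea.
  by rewrite (negbTE eb) (negbTE ea).
split=> [x xr|]; last by rewrite out_same ?outT.2 // eq_sym (tl_neq_root outT aT).
have [->|xa] := eqVneq x (tl a); last by rewrite out_same ?outT.1.
suff -> : [set e in b |: (T :\ a) | tl e == tl a] = [set b] by rewrite cards1.
apply/setP => e; rewrite !inE; have [->|eb] /= := eqVneq e b; first by rewrite tab eqxx.
apply/negbTE/andP => -[/andP [ea eT] /eqP tea].
by rewrite (out_edge_uniq outT eT aT tea) eqxx in ea.
Qed.

Lemma exchange_spanning_arborescence T a b :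
  spanning_arborescence tl hd root T -> a \in T -> tl a = tl b ->
  reach (T :\ a) (hd b) root -> spanning_arborescence tl hd root (b |: (T :\ a)).
Proof.
move=> /spanning_arborescenceP [outT reachT] aT tab broot.
apply/spanning_arborescenceP; split; first exact: rooted_outdeg_exchange.
have sub : T :\ a \subset b |: (T :\ a) by apply: subsetUr.
have aroot : reach (b |: (T :\ a)) (tl a) root.
  apply: connect_trans (connect1 _) (reach_subset sub broot).
  by apply/erelP; exists b; rewrite ?setU11.
move=> x; have [xa|xa] := boolP (reach T x (tl a)).
  exact: connect_trans (reach_subset sub (reach_setD1_tl xa)) aroot.
exact: reach_subset sub (reach_setD1 xa (reachT x)).
Qed.

Lemma is_merge_exists T u v :
  spanning_arborescence tl hd root T -> exists z, is_merge tl hd T u v z.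
Proof.
move=> /spanning_arborescenceP [outT reachT].
have [z [vz uz minz]] :=
  connect_first_hit (erel_deterministic outT) (P := reach T v) (reachT u) (reachT v).
exists z; rewrite /is_merge uz vz; apply/forallP => y.
by apply/implyP => /andP [uy vy]; exact: minz.
Qed.

Lemma tl_in_Sigma (T : {set E}) u v e :
  e \in T -> reach T u (tl e) != reach T v (tl e) -> tl e \in Sigma tl hd T u v.
Proof.
move=> eT uv; rewrite /Sigma inE /is_merge; apply/andP; split; last first.
  by case: (reach T u _) uv; case: (reach T v _).
apply/existsP; exists e; rewrite !inE eT eqxx.
by case: (reach T u _) uv; case: (reach T v _).
Qed.

Lemma in_Sigma_before_merge (T : {set E}) u v z a :
  spanning_arborescence tl hd root T -> is_merge tl hd T u v z ->
  reach T u a || reach T v a -> reach T a z -> a != z -> a \in Sigma tl hd T u v.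
Proof.
move=> /spanning_arborescenceP [outT reachT] /and3P [_ _ /forallP minz] ua az anz.
have [ar|ar] := eqVneq a root.
  case: (connect_first_step az) => [za|[b rb _]]; first by rewrite za eqxx in anz.
  by move: (erel_root_sink outT b); rewrite -ar rb.
have [e eT tea] := out_edge_exists outT ar; rewrite -tea in ua az anz *.
apply: tl_in_Sigma => //; apply: contra_neq anz => uv.
have uA : reach T u (tl e) by move: ua; rewrite -uv orbb.
have vA : reach T v (tl e) by rewrite -uv.
apply: (connect_antisym (erel_deterministic outT) (erel_root_sink outT) reachT az).
by apply: (implyP (minz (tl e))); rewrite uA vA.
Qed.

Lemma in_Sigma_of_not_reach (T : {set E}) u v :
  spanning_arborescence tl hd root T -> ~~ reach T u v -> v \in Sigma tl hd T u v.
Proof.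
move=> arbT uv; have [z zm] := is_merge_exists u v arbT.
have /and3P [uz vz _] := zm.
apply: in_Sigma_before_merge arbT zm _ vz _; first by rewrite connect0 orbT.
by apply: contraNneq uv => ->.
Qed.

Lemma erel_agree (T T' : {set E}) a b :
  rooted_outdeg T -> rooted_outdeg T' -> (forall f, f \in T' -> tl f = a -> f \in T) ->
  erel T a b -> erel T' a b.
Proof.
move=> outT outT' agree /erelP [e eT [tea heb]].
have [f fT' tf] := out_edge_exists outT' (tl_neq_root outT eT); rewrite tea in tf.
by apply/erelP; exists f; rewrite // (out_edge_uniq outT (agree f fT' tf) eT) ?tf.
Qed.

Lemma exchange_back (T T' : {set E}) e1 e2 :
  spanning_arborescence tl hd root T -> spanning_arborescence tl hd root T' ->
  e1 \in T -> e1 \notin T' -> tl e2 = tl e1 -> ~~ reach T (hd e2) (tl e1) ->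
  (forall f, f \in T' -> tl f \in Sigma tl hd T (hd e2) (tl e1) -> f \in T \/ f = e2) ->
  e2 \in T' /\ spanning_arborescence tl hd root (e1 |: (T' :\ e2)).
Proof.
move=> arbT arbT' e1T e1T' te21 uv agree.
set u := hd e2 in uv agree *; set v := tl e1 in te21 uv agree *.
set S := Sigma tl hd T u v in agree.
have /spanning_arborescenceP [outT reachT] := arbT.
have /spanning_arborescenceP [outT' reachT'] := arbT'.
have [z zm] := is_merge_exists u v arbT; have /and3P [uz vz _] := zm.
have vz_neq : v != z by apply: contraNneq uv => ->.
have e2T' : e2 \in T'.
  have [f fT' tf] := out_edge_exists outT' (tl_neq_root outT e1T).
  case: (agree f fT') => [|fT|<- //]; first by rewrite tf in_Sigma_of_not_reach.
  by move: e1T'; rewrite -(out_edge_uniq outT fT e1T tf) fT'.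
have agree_step a b : a \in S -> a != v -> erel T a b -> erel T' a b.
  move=> aS av; apply: erel_agree outT outT' _ => f fT' tf.
  case: (agree f fT') => [|//|fe2]; first by rewrite tf.
  by move: av; rewrite -tf fe2 te21 eqxx.
have uz' : reach T' u z.
  apply: connect_sub_before uz => a b anz ua az; apply: agree_step.
    by apply: in_Sigma_before_merge arbT zm _ az anz; rewrite ua.
  by apply: contraNneq uv => <-.
have zv' : ~~ reach T' z v.
  apply: contra_neqN vz_neq => zv.
  apply: (connect_antisym (erel_deterministic outT') (erel_root_sink outT') reachT' _ zv).
  by apply: connect_trans (connect1 _) uz'; apply/erelP; exists e2.
have ev1 : erel T v (hd e1) by apply/erelP; exists e1.
have v1z : reach (T' :\ e2) (hd e1) z.
  have v1z : reach T (hd e1) z.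
    case: (connect_first_step vz) => [zv|[c vc cz]]; first by rewrite zv eqxx in vz_neq.
    by rewrite (erel_deterministic outT ev1 vc).
  apply: connect_sub_before v1z => a b anz v1a az eab.
  have av : a != v.
    apply/eqP => av; rewrite av in v1a.
    exact: (no_closed_walk (erel_deterministic outT) (erel_root_sink outT) reachT ev1 v1a).
  apply: erel_setD1; first by rewrite te21.
  apply: agree_step av eab; apply: in_Sigma_before_merge arbT zm _ az anz.
  by rewrite (connect_trans (connect1 ev1) v1a) orbT.
split=> //; apply: (exchange_spanning_arborescence arbT' e2T' te21).
by apply: connect_trans v1z (reach_setD1 _ (reachT' z)); rewrite te21.
Qed.

End Arborescences.

Local Open Scope ring_scope.

Section Weights.
Variables (E : finType) (R : realFieldType) (w : E -> R).

Lemma weight_setD1 (T : {set E}) a : a \in T -> weight w T = w a + weight w (T :\ a).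
Proof. by move=> aT; rewrite /weight (big_setD1 a). Qed.

Lemma weight_exchange (T : {set E}) a b :
  a \in T -> b \notin T -> weight w (b |: (T :\ a)) = weight w T - w a + w b.
Proof.
move=> aT bT; rewrite (weight_setD1 aT) /weight big_setU1 /=; first lra.
by rewrite !inE (negbTE bT) andbF.
Qed.

Lemma le_M_Sigma (V : finType) (tl : E -> V) (S : {set V}) e :
  tl e \in S -> w e <= M_Sigma tl w S.
Proof. by move=> eS; rewrite /M_Sigma (bigD1 e) //= le_max lexx. Qed.

End Weights.

Section Reweighting.
Variables (E : finType) (R : realFieldType) (w w' : E -> R) (heavy : pred E) (M : R).
Hypotheses (w_ge0 : forall e, 0 <= w e) (le_w_M : forall e, heavy e -> w e <= M).
Hypotheses (heavy_w' : forall e, heavy e -> 2 * M <= w' e)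
           (light_w' : forall e, ~~ heavy e -> w' e = w e).

Lemma le_w_w' e : w e <= w' e.
Proof.
have [heavy_e|] := boolP (heavy e); last by move/light_w'->.
by have := heavy_w' heavy_e; have := le_w_M heavy_e; have := w_ge0 e; lra.
Qed.

Lemma weight_light (T : {set E}) : {in T, forall e, ~~ heavy e} -> weight w' T = weight w T.
Proof. by move=> light; apply: eq_bigr => e /light /light_w'. Qed.

Lemma weight_heavy (T : {set E}) h : h \in T -> heavy h -> weight w T + M <= weight w' T.
Proof.
move=> hT heavy_h; rewrite (weight_setD1 w hT) (weight_setD1 w' hT).
have : weight w (T :\ h) <= weight w' (T :\ h) by apply: ler_sum => e _; apply: le_w_w'.
by have := heavy_w' heavy_h; have := le_w_M heavy_h; lra.
Qed.

End Reweighting.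

Theorem mainTheorem11 (R : realFieldType) (V E : finType)
  (tl hd : E -> V) (rev : E -> E) (root : V)
  (* oriented multigraph structure *)
  (Hrevrev : forall e, rev (rev e) = e)
  (Hrevne : forall e, rev e != e)
  (Hrevtl : forall e, tl (rev e) = hd e)
  (Hrevhd : forall e, hd (rev e) = tl e)
  (* no self-loops *)
  (Hloop : forall e, tl e != hd e)
  (* connected *)
  (Hconn : forall x, connect (erel tl hd [set: E]) x root)
  (w w' : E -> R)
  (Hwnn : forall e, 0 <= w e)
  (Hwgen : generic w)
  (Tstar : {set E})
  (HTstar : is_MSA tl hd root w Tstar)
  (v : V) (e1 e2 : E)
  (He1 : tl e1 = v) (He2 : tl e2 = v) (He12 : e1 != e2)
  (He1T : e1 \in Tstar)
  (Hvu : ~~ connect (erel tl hd Tstar) (hd e2) v)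
  (Hw'gen : generic w')
  (Hw'big : forall e,
     (((tl e \in Sigma tl hd Tstar (hd e2) v) && (e \notin Tstar) && (e != e2))
       || (e == e1)) ->
     2 * M_Sigma tl w (Sigma tl hd Tstar (hd e2) v) <= w' e)
  (Hw'eq : forall e,
     ~~ (((tl e \in Sigma tl hd Tstar (hd e2) v) && (e \notin Tstar) && (e != e2))
       || (e == e1)) ->
     w' e = w e) :
  is_MSA tl hd root w' (e2 |: (Tstar :\ e1)).
Proof.
set S := Sigma tl hd Tstar (hd e2) v in Hw'big Hw'eq.
pose heavy e := ((tl e \in S) && (e \notin Tstar) && (e != e2)) || (e == e1).
have [arbT minT] := HTstar; have /spanning_arborescenceP [outT reachT] := arbT.
have vS : v \in S := in_Sigma_of_not_reach arbT Hvu.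
have le_wM e : heavy e -> w e <= M_Sigma tl w S.
  by move=> /orP [/andP [/andP [eS _] _]|/eqP ->]; apply: le_M_Sigma; rewrite ?He1.
have wM2 : w e2 <= M_Sigma tl w S by apply: le_M_Sigma; rewrite He2.
have e2T : e2 \notin Tstar.
  by apply: contraNN He12 => e2T; rewrite (out_edge_uniq outT He1T e2T) // He1 He2.
have wT' : weight w' (e2 |: (Tstar :\ e1)) = weight w Tstar - w e1 + w e2.
  rewrite (weight_light Hw'eq) ?weight_exchange // => e; rewrite !inE.
  case/orP => [/eqP ->|/andP [ee1 ->]]; last by rewrite andbF (negbTE ee1).
  by rewrite eqxx andbF eq_sym (negbTE He12).
split.
  apply: exchange_spanning_arborescence arbT He1T _ (reach_setD1 _ (reachT _));
  by rewrite He1 ?He2.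
move=> T'' arbT''; rewrite wT'; have := minT _ arbT''.
have [/exists_inP [h hT'' heavy_h]|/exists_inPn light] := boolP [exists h in T'', heavy h].
  by have := weight_heavy Hwnn le_wM Hw'big Hw'eq hT'' heavy_h; have := Hwnn e1; lra.
have e1T'' : e1 \notin T'' by apply/negP => /light; rewrite /heavy eqxx orbT.
have agree f : f \in T'' -> tl f \in S -> f \in Tstar \/ f = e2.
  move=> fT'' fS; move: (light f fT''); rewrite /heavy fS eq_sym negb_or negb_and.
  by case: (f \in Tstar) => /=; [left | rewrite negbK => /andP [/eqP]; right].
have [e2T'' arb3] : e2 \in T'' /\ spanning_arborescence tl hd root (e1 |: (T'' :\ e2)).
  by apply: exchange_back arbT arbT'' He1T e1T'' _ _ _; rewrite ?He1 ?He2.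
rewrite (weight_light Hw'eq light).
by have := minT _ arb3; rewrite weight_exchange //; lra.
Qed.
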